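(* Let $n\geq 1$ and let $\mathcal{F}$ be a sunflower-free collection of subsets of $\{1,2,\dots,n\}$. Then \[ |\mathcal{F}|\leq 3(n+1)\sum_{0\leq k\leq n/3}\binom{n}{k}, \] and consequently \[ \mu_{3}^{S}\leq\frac{3}{2^{2/3}}=1.889881574\dots \]
   Context: Three sets form a (3-)sunflower if the intersection of any two of them is the same set (i.e. $A\cap B=A\cap C=B\cap C$). A family $\mathcal{F}$ of sets is sunflower-free if no three distinct members of $\mathcal{F}$ form a sunflower. Let $F_3(n)$ denote the maximum size of a sunflower-free collection of subsets of $\{1,2,\dots,n\}$, and define the Erdős–Szemerédi sunflower-free capacity $\mu_3^S=\limsup_{n\to\infty}F_3(n)^{1/n}$. *)

From HB Require Import structures.
From mathcomp Require Import all_boot all_order all_algebra.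
From mathcomp Require Import all_classical all_reals all_analysis.
Set Implicit Arguments. Unset Strict Implicit. Unset Printing Implicit Defensive.
Import Order.TTheory GRing.Theory Num.Theory.

(* The ground set {1,...,n} is modelled by the finite type 'I_n. *)

Definition is_sunflower (T : finType) (A B C : {set T}) : Prop :=
  A :&: B = A :&: C /\ A :&: C = B :&: C.

Definition sunflower_free (T : finType) (F : {set {set T}}) : Prop :=
  forall A B C, A \in F -> B \in F -> C \in F ->
    A != B -> A != C -> B != C -> ~ is_sunflower A B C.

Definition F3 (n : nat) : nat :=
  \max_(F : {set {set 'I_n}} | `[< sunflower_free F >]) #|F|.

Definition mu3S (R : realType) : \bar R :=
  limn_esup (fun n : nat => (((F3 n)%:R : R) `^ (n%:R^-1))%:E).

(* Slice-rank argument of Naslund and Sawin.  If three sets of equal size are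
   not all equal and no point lies in exactly two of them, they are pairwise
   distinct and form a sunflower.  Hence on each layer [#|X| = m] of a
   sunflower-free family the polynomial [prod_i (2 - x_i - y_i - z_i)], which
   vanishes as soon as some [x_i + y_i + z_i = 2], restricts to a diagonal tensor
   with nonzero diagonal.  Each of its monomials has one of its three variable
   blocks supported on at most [n / 3] points, which writes the tensor as a sum of
   slices indexed by the sets of size at most [n / 3]; a diagonal tensor has slice
   rank equal to its size, so a layer has at most [3 * sum_(k <= n/3) 'C(n, k)]
   members.  Summing over the [n + 1] layers and using
   [sum_(k <= n/3) 'C(n, k) <= (3 / 2 ^ (2/3)) ^ n] gives both claims. *)

From HB Require Import structures.
From mathcomp Require Import all_boot all_order all_algebra.
From mathcomp Require Import all_classical all_reals all_analysis.
From mathcomp Require Import zify ring lra.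
Set Implicit Arguments. Unset Strict Implicit. Unset Printing Implicit Defensive.
Import Order.TTheory GRing.Theory Num.Theory.

Local Open Scope ring_scope.

Lemma prod_nat_bool (I : finType) (R : comPzSemiRingType) (P : pred I) :
  \prod_i (P i)%:R = [forall i, P i]%:R :> R.
Proof.
have [allP|/forallPn[i /negbTE Pi]] := boolP [forall i, P i].
  by rewrite big1 // => i _; rewrite (forallP allP).
by rewrite (bigD1 i) //= Pi mul0r.
Qed.

Section SliceRank.
Variable F : fieldType.

Lemma mxrankM_diag m n (A : 'M[F]_(m, n)) (e : 'rV[F]_n) : (forall k, e 0 k != 0) ->
  \rank (A *m diag_mx e) = \rank A.
Proof.
move=> e_nz; apply: mxrankMfree; rewrite row_free_unit unitmxE det_diag unitfE.
by apply/prodf_neq0 => k _; apply: e_nz.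
Qed.

(* The rows of [P] indexed by [maxrankfun P] span its row space, so every
   row of [P] can be cancelled against them: this yields a kernel vector
   equal to [1] off these [\rank P] rows. *)
Lemma left_kernel_diag_rank a N (P : 'M[F]_(a, N)) :
  exists2 v : 'rV[F]_a, v *m P = 0 & (a <= \rank P + \rank (diag_mx v))%N.
Proof.
set f := maxrankfun P.
have f_inj : injective f by apply: maxrankfun_inj.
pose Rf : 'M[F]_(\rank P, a) := rowsub f 1%:M.
have [C defP] : exists C, P = C *m (Rf *m P).
  have /submxP[C] : (P <= rowsub f P)%MS by rewrite eq_maxrowsub.
  by rewrite rowsubE => defP; exists C.
pose v : 'rV[F]_a := const_mx 1 - const_mx 1 *m C *m Rf.
exists v; first by rewrite mulmxBl -!mulmxA -defP subrr.
pose D : 'M[F]_a := diag_mx (\row_k (k \notin codom f)%:R).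
have f_neq i k : k \notin codom f -> (f i == k) = false.
  by move=> kf; apply: contraNF kf => /eqP <-; apply: codom_f.
have v1 k : k \notin codom f -> v 0 k = 1.
  by move=> kf; rewrite !mxE big1 ?subr0 // => i _; rewrite !mxE f_neq ?mulr0.
have DvD : diag_mx v *m D = D.
  apply/matrixP => k l; rewrite mul_diag_mx mxE.
  have [kf|kf] := boolP (k \in codom f); last by rewrite v1 // mul1r.
  by rewrite /D !mxE kf mul0rn mulr0.
have RfRfD : Rf^T *m Rf + D = 1%:M.
  apply/matrixP => k l; rewrite !mxE; under eq_bigr do rewrite !mxE.
  case: (boolP (k \in codom f)) => [/codomP[i ->]|kf].
    rewrite /= mulr0n mul0rn addr0 (bigD1 i) //= big1 ?eqxx ?mul1r ?addr0 // => j ji.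
    by case: eqP => [/f_inj ij|]; [rewrite ij eqxx in ji | rewrite mul0r].
  by rewrite /= mulr1n big1 ?add0r // => i _; rewrite f_neq ?mul0r.
have rk_RfRf : (\rank (Rf^T *m Rf) <= \rank P)%N.
  by apply: leq_trans (mxrankM_maxl _ _) _; rewrite mxrank_tr rank_leq_row.
rewrite -{1}(mxrank1 F a) -RfRfD; apply: leq_trans (mxrank_add _ _) _.
by rewrite leq_add // -DvD mxrankM_maxl.
Qed.

Lemma exchange_mul_sums (I J : finType) (x : I -> F) (y : J -> F) (z : I -> J -> F) :
  \sum_i x i * \sum_j y j * z i j = \sum_j y j * \sum_i x i * z i j.
Proof.
under eq_bigr do rewrite big_distrr; rewrite exchange_big.
by apply: eq_bigr => j _; rewrite big_distrr; apply: eq_bigr => i _; exact: mulrCA.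
Qed.

(* Contracting the first coordinate with a kernel vector [v] of [P] kills the
   first family of slices and leaves the diagonal matrix [diag (v * d)], of
   rank at least [a - N], written as a sum of two matrices of rank at most [N]. *)
Lemma diag_tensor_slices_le a N (P : 'M[F]_(a, N)) (d : 'rV[F]_a)
    (G H K : 'I_N -> 'I_a -> 'I_a -> F) :
  (forall k, d 0 k != 0) ->
  (forall j k l, ((j == k) && (k == l))%:R * d 0 j =
     \sum_s P j s * G s k l + \sum_s P k s * H s j l + \sum_s P l s * K s j k) ->
  (a <= 3 * N)%N.
Proof.
move=> d_nz slices; have [v vP rk_v] := left_kernel_diag_rank P.
pose H' : 'M[F]_(N, a) := \matrix_(s, l) \sum_j v 0 j * H s j l.
pose K' : 'M[F]_(N, a) := \matrix_(s, k) \sum_j v 0 j * K s j k.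
have contract : diag_mx v *m diag_mx d = (P *m H' + (P *m K')^T)%R.
  apply/matrixP => k l; rewrite mul_diag_mx !mxE.
  transitivity (\sum_j v 0 j * (((j == k) && (k == l))%:R * d 0 j)).
    rewrite (bigD1 k) //= big1 ?addr0 => [|j /negbTE->]; last by rewrite mul0r mulr0.
    by rewrite eqxx /= mulr_natl.
  under eq_bigr do rewrite slices !mulrDr; rewrite !big_split /=.
  rewrite [X in X + _ + _](_ : _ = 0) ?add0r; last first.
    under eq_bigr do under eq_bigr do rewrite mulrC.
    rewrite exchange_mul_sums big1 // => s _.
    by have := congr1 (fun w : 'rV_N => w 0 s) vP; rewrite !mxE => ->; rewrite mulr0.
  by congr (_ + _); rewrite exchange_mul_sums; apply: eq_bigr => s _; rewrite mxE.
have rk_PM (M : 'M[F]_(N, a)) : (\rank (P *m M) <= N)%N.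
  exact: leq_trans (mxrankM_maxr _ _) (rank_leq_row _).
rewrite -(mxrankM_diag _ d_nz) contract in rk_v.
apply: leq_trans rk_v _; rewrite mulSn mul2n -addnn leq_add ?rank_leq_col //.
by rewrite (leq_trans (mxrank_add _ _)) // mxrank_tr leq_add.
Qed.

End SliceRank.

Section SunflowerPolynomial.
Variable T : finType.
Implicit Types X Y Z S : {set T}.

Definition multiplicity X Y Z (i : T) : nat := ((i \in X) + (i \in Y) + (i \in Z))%N.

Lemma sunflower_of_no_double X Y Z :
  (forall i, multiplicity X Y Z i != 2%N) -> is_sunflower X Y Z.
Proof.
rewrite /multiplicity => no2; split; apply/setP => i; have := no2 i; rewrite !inE;
  by case: (i \in X); case: (i \in Y); case: (i \in Z).
Qed.

Lemma eq_of_no_double X Z : #|X| = #|Z| ->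
  (forall i, multiplicity X X Z i != 2%N) -> X = Z.
Proof.
move=> cardXZ no2; apply/eqP; rewrite eqEcard cardXZ leqnn andbT.
apply/fintype.subsetP => i iX; apply: contraR (no2 i) => iZ.
by rewrite /multiplicity iX (negbTE iZ).
Qed.

Definition small_sets : {set {set T}} := [set S : {set T} | (3 * #|S| <= #|T|)%N].

Definition sunflower_poly X Y Z : rat :=
  \prod_i (2 - (i \in X)%:R - (i \in Y)%:R - (i \in Z)%:R).

Lemma sunflower_poly_eq0 X Y Z i :
  multiplicity X Y Z i = 2%N -> sunflower_poly X Y Z = 0.
Proof.
move=> two; rewrite /sunflower_poly (bigD1 i) //= [E in E * _](_ : _ = 0) ?mul0r //.
by move: two; rewrite /multiplicity; case: (i \in X); case: (i \in Y); case: (i \in Z).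
Qed.

Lemma sunflower_poly_diag_neq0 X : sunflower_poly X X X != 0.
Proof. by apply/prodf_neq0 => i _; case: (i \in X). Qed.

Lemma sunflower_poly_diag (F : {set {set T}}) X Y Z :
  sunflower_free F -> X \in F -> Y \in F -> Z \in F -> #|X| = #|Y| -> #|Y| = #|Z| ->
  sunflower_poly X Y Z = ((X == Y) && (Y == Z))%:R * sunflower_poly X X X.
Proof.
move=> sfF XF YF ZF cXY cYZ.
have [/existsP[i /eqP two]|/existsPn no2] := boolP [exists i, multiplicity X Y Z i == 2%N].
  rewrite (sunflower_poly_eq0 two).
  case: (X =P Y) => [eXY|_]; last by rewrite mul0r.
  case: (Y =P Z) => [eYZ|_]; last by rewrite mul0r.
  by move: two; rewrite /multiplicity -eYZ -eXY; case: (i \in X).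
suff [<- <-] : X = Y /\ Y = Z by rewrite !eqxx mul1r.
have [eXY|nXY] := eqVneq X Y; first by subst Y; split=> //; exact: eq_of_no_double cYZ no2.
have [eXZ|nXZ] := eqVneq X Z.
  case/negP: nXY; apply/eqP; apply: eq_of_no_double; first by rewrite cXY.
  by move=> i; rewrite /multiplicity addnAC {2}eXZ; exact: no2.
have [eYZ|nYZ] := eqVneq Y Z.
  case/negP: nXY; apply/eqP/esym/eq_of_no_double; first by rewrite cXY.
  by move=> i; rewrite /multiplicity addnC addnA {2}eYZ; exact: no2.
by case: (sfF _ _ _ XF YF ZF nXY nXZ nYZ); apply: sunflower_of_no_double.
Qed.

(* A monomial is encoded by [g : {ffun T -> 'I_4}]: at the point [i] it takes
   the constant [2] when [g i = 0], and [-x_i], [-y_i], [-z_i] when [g i = 1, 2, 3]. *)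
Definition fiber (g : {ffun T -> 'I_4}) (c : nat) : {set T} := [set i | g i == c :> nat].

Definition monomial_coef (g : {ffun T -> 'I_4}) : rat :=
  \prod_i (if g i == 0 :> nat then 2 else -1).

Lemma fiber_subsetE g c X :
  (fiber g c \subset X) = [forall i, (g i == c :> nat) ==> (i \in X)].
Proof.
apply/fintype.subsetP/forallP => [sub i|all i].
  by apply/implyP => gi; apply: sub; rewrite inE.
by rewrite inE => gi; apply: (implyP (all i)).
Qed.

Lemma sunflower_poly_expand X Y Z : sunflower_poly X Y Z =
  \sum_(g : {ffun T -> 'I_4}) monomial_coef g *
    [&& fiber g 1 \subset X, fiber g 2 \subset Y & fiber g 3 \subset Z]%:R.
Proof.
pose term i (c : 'I_4) : rat := [:: 2; - (i \in X)%:R; - (i \in Y)%:R; - (i \in Z)%:R]`_c.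
have -> : sunflower_poly X Y Z = \prod_i \sum_c term i c.
  by apply: eq_bigr => i _; rewrite !big_ord_recl big_ord0 /= addr0 !addrA.
rewrite bigA_distr_bigA; apply: eq_bigr => g _.
rewrite -!mulnb !natrM !fiber_subsetE -!prod_nat_bool -!big_split.
apply: eq_bigr => i _ /=; rewrite /term; case: (g i) => [[|[|[|[|c]]]] ?] //=;
  by rewrite ?mulr1 ?mul1r mulN1r.
Qed.

Lemma card_fibers (g : {ffun T -> 'I_4}) :
  (#|fiber g 1| + #|fiber g 2| + #|fiber g 3| <= #|T|)%N.
Proof.
have disj12 : fiber g 1 :&: fiber g 2 = finset.set0.
  by apply/setP => i; rewrite !inE; case: (nat_of_ord (g i)) => [|[|[|]]].
have disj3 : (fiber g 1 :|: fiber g 2) :&: fiber g 3 = finset.set0.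
  by apply/setP => i; rewrite !inE; case: (nat_of_ord (g i)) => [|[|[|]]].
rewrite -cardsUI disj12 cards0 addn0 -cardsUI disj3 cards0 addn0.
exact: max_card.
Qed.

(* Every monomial has one of its three fibers of size at most [#|T| / 3]; grouping
   the monomials accordingly exhibits the polynomial as a sum of slices. *)
Lemma sunflower_poly_slices :
  exists G H K : {set T} -> {set T} -> {set T} -> rat, forall X Y Z,
    sunflower_poly X Y Z =
      \sum_(S in small_sets) (S \subset X)%:R * G S Y Z +
      \sum_(S in small_sets) (S \subset Y)%:R * H S X Z +
      \sum_(S in small_sets) (S \subset Z)%:R * K S X Y.
Proof.
pose small1 g := fiber g 1 \in small_sets.
pose small2 g := fiber g 2 \in small_sets.
exists (fun S Y Z => \sum_(g | small1 g && (fiber g 1 == S))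
  monomial_coef g * (fiber g 2 \subset Y)%:R * (fiber g 3 \subset Z)%:R).
exists (fun S X Z => \sum_(g | (~~ small1 g && small2 g) && (fiber g 2 == S))
  monomial_coef g * (fiber g 1 \subset X)%:R * (fiber g 3 \subset Z)%:R).
exists (fun S X Y => \sum_(g | (~~ small1 g && ~~ small2 g) && (fiber g 3 == S))
  monomial_coef g * (fiber g 1 \subset X)%:R * (fiber g 2 \subset Y)%:R).
move=> X Y Z; rewrite sunflower_poly_expand (bigID small1) -addrA /=; congr (_ + _).
  rewrite (partition_big (fiber^~ 1%N) (mem small_sets)) //=.
  apply: eq_bigr => S _; rewrite big_distrr; apply: eq_bigr => g /andP[_ /eqP <-].
  by rewrite -!mulnb !natrM /=; ring.
rewrite (bigID small2) /=; congr (_ + _).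
- rewrite (partition_big (fiber^~ 2%N) (mem small_sets)) => [|g /andP[]//].
  apply: eq_bigr => S _; rewrite big_distrr; apply: eq_bigr => g /andP[_ /eqP <-].
  by rewrite -!mulnb !natrM /=; ring.
- rewrite (partition_big (fiber^~ 3%N) (mem small_sets)) => [|g]; last first.
    by rewrite /small1 /small2 !inE -!ltnNge => /andP[]; have := card_fibers g; lia.
  apply: eq_bigr => S _; rewrite big_distrr; apply: eq_bigr => g /andP[_ /eqP <-].
  by rewrite -!mulnb !natrM /=; ring.
Qed.

Lemma card_sunflower_free_layer_le (F : {set {set T}}) m : sunflower_free F ->
  (#|[set X in F | #|X| == m]| <= 3 * #|small_sets|)%N.
Proof.
move=> sfF; set Fm := [set X in F | #|X| == m].
have [G [H [K slices]]] := sunflower_poly_slices.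
pose X_ (j : 'I_#|Fm|) : {set T} := enum_val j.
pose S_ (s : 'I_#|small_sets|) : {set T} := enum_val s.
have X_F j : X_ j \in F by have := enum_valP j; rewrite inE => /andP[].
have X_card j : #|X_ j| = m by have := enum_valP j; rewrite inE => /andP[_ /eqP].
apply: (@diag_tensor_slices_le _ _ _ (\matrix_(j, s) (S_ s \subset X_ j)%:R)
  (\row_j sunflower_poly (X_ j) (X_ j) (X_ j))
  (fun s k l => G (S_ s) (X_ k) (X_ l)) (fun s j l => H (S_ s) (X_ j) (X_ l))
  (fun s j k => K (S_ s) (X_ j) (X_ k))) => [k|j k l].
  by rewrite mxE sunflower_poly_diag_neq0.
rewrite mxE -(inj_eq enum_val_inj) -[k == l](inj_eq enum_val_inj).
rewrite -(sunflower_poly_diag sfF) ?X_F ?X_card // slices.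
by congr (_ + _ + _); rewrite (big_enum_val (A := mem small_sets));
  apply: eq_bigr => s _; rewrite mxE.
Qed.

Lemma card_by_size (F : {set {set T}}) :
  #|F| = (\sum_(k < #|T|.+1) #|[set X in F | #|X| == k]|)%N.
Proof.
rewrite -sum1_card (partition_big (fun X => inord #|X| : 'I_#|T|.+1) xpredT) //=.
apply: eq_bigr => k _; rewrite -[#|[set _ in F | _]|]sum1_card; apply: eq_bigl => X.
by rewrite inE -(inj_eq val_inj) /= inordK // ltnS max_card.
Qed.

Lemma card_small_sets :
  #|small_sets| = (\sum_(k < #|T|.+1 | 3 * k <= #|T|) 'C(#|T|, k))%N.
Proof.
rewrite card_by_size [RHS]big_mkcond /=; apply: eq_bigr => k _.
case: ifP => small_k.
  rewrite -card_draws; apply: eq_card => X; rewrite !inE.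
  by apply/andP/idP => [[] //|/[dup] /eqP-> ->].
apply/eqP; rewrite cards_eq0; apply/eqP/setP => X; rewrite !inE.
by apply/andP => -[+ /eqP cardX]; rewrite cardX small_k.
Qed.

Lemma card_sunflower_free_le (F : {set {set T}}) : sunflower_free F ->
  (#|F| <= 3 * #|T|.+1 * \sum_(k < #|T|.+1 | 3 * k <= #|T|) 'C(#|T|, k))%N.
Proof.
move=> sfF; rewrite -card_small_sets card_by_size.
apply: (@leq_trans (\sum_(k < #|T|.+1) 3 * #|small_sets|)).
  by apply: leq_sum => k _; apply: card_sunflower_free_layer_le.
by rewrite sum_nat_const card_ord mulnCA mulnA.
Qed.

End SunflowerPolynomial.

Lemma card_sunflower_free_ord_le n (F : {set {set 'I_n}}) : sunflower_free F ->
  (#|F| <= 3 * n.+1 * \sum_(k < n.+1 | 3 * k <= n) 'C(n, k))%N.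
Proof. by move/card_sunflower_free_le; rewrite card_ord. Qed.

Section Capacity.
Variable R : realType.
Local Open Scope classical_set_scope.

(* [(1 + e) ^ n >= 'C(n, 2) e ^ 2] grows quadratically. *)
Lemma linear_le_expr_near (c e : R) : 0 < e ->
  \forall n \near \oo, c * n.+1%:R <= (1 + e) ^+ n.
Proof.
move=> e0; near=> n.
have n3 : (3 <= n)%N by near: n; exists 3%N.
have ne : 4 * `|c| <= n%:R * e ^+ 2.
  by rewrite -ler_pdivrMr ?exprn_gt0 //; near: n; apply: nbhs_infty_ger.
have binom : e ^+ 2 * 'C(n, 2)%:R <= (1 + e) ^+ n.
  rewrite addrC exprD1n (bigD1 (inord 2)) //= inordK ?ltnS ?(leq_trans _ n3) //.
  rewrite mulr_natr lerDl.
  by apply: sumr_ge0 => i _; rewrite mulrn_wge0 // exprn_ge0 // ltW.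
have C2 : 'C(n, 2)%:R * 2 = n%:R * (n%:R - 1) :> R.
  have /(congr1 (fun k => k%:R : R)) := mul_bin_diag n 1.
  by rewrite bin1 !natrM -subn1 natrB ?(leq_trans _ n3) // => ->; rewrite mulrC.
have n3R : 3 <= n%:R :> R by rewrite (ler_nat R 3).
have c1 : c * n.+1%:R <= `|c| * (2 * (n%:R - 1)).
  rewrite (le_trans (ler_wpM2r _ (ler_norm c))) ?ler_wpM2l // -natr1; lra.
have c2 : 4 * `|c| * (n%:R - 1) <= n%:R * e ^+ 2 * (n%:R - 1).
  by rewrite ler_wpM2r // subr_ge0; lra.
have c3 : e ^+ 2 * 'C(n, 2)%:R * 2 = e ^+ 2 * n%:R * (n%:R - 1) by rewrite -mulrA C2 mulrA.
lra.
Unshelve. all: by end_near.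
Qed.

Lemma powR_inv_le (x y : R) n : 0 <= x -> 0 <= y -> (0 < n)%N ->
  x <= y ^+ n -> x `^ n%:R^-1 <= y.
Proof.
move=> x0 y0 n0 le_xy.
have -> : y = (y ^+ n) `^ n%:R^-1.
  by rewrite -powR_mulrn // -powRrM mulfV ?powRr1 // pnatr_eq0 -lt0n.
by apply: ge0_ler_powR; rewrite ?invr_ge0 ?nnegrE ?exprn_ge0.
Qed.

Lemma limn_esup_le_near (u : (\bar R)^nat) (l : \bar R) :
  (\forall n \near \oo, u n <= l)%E -> (limn_esup u <= l)%E.
Proof.
move=> [M _ ul]; rewrite limn_esup_lim; apply: lime_le; first exact: is_cvg_esups.
exists M => // m Mm; apply: ge_ereal_sup => _ [k /= mk <-].
by apply: ul; apply: leq_trans Mm mk.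
Qed.

Definition mu3S_bound : R := 3 / 2 `^ (2 / 3).

Lemma mu3S_bound_gt0 : 0 < mu3S_bound.
Proof. by rewrite divr_gt0 ?powR_gt0. Qed.

(* Weight the subsets of size [k <= n / 3] by [2 ^ (n - k) >= 2 ^ (2 n / 3)]
   inside [3 ^ n = \sum_k 'C(n, k) 2 ^ (n - k)]. *)
Lemma sum_binomial_third_le n :
  ((\sum_(k < n.+1 | 3 * k <= n) 'C(n, k))%N%:R : R) <= mu3S_bound ^+ n.
Proof.
have two_thirds (k : 'I_n.+1) : (3 * k <= n)%N -> (2 `^ (2 / 3)) ^+ n <= 2 ^+ (n - k) :> R.
  move=> kn; rewrite -!powR_mulrn // -powRrM ler_powR ?ler1n //.
  have kR : 3 * k%:R <= n%:R :> R by rewrite -natrM ler_nat.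
  by rewrite natrB ?(leq_trans _ kn) ?leq_pmull //; lra.
rewrite expr_div_n ler_pdivlMr ?exprn_gt0 ?powR_gt0 // natr_sum big_distrl /=.
have -> : 3 ^+ n = \sum_(k < n.+1) 2 ^+ (n - k) *+ 'C(n, k) :> R.
  rewrite (_ : 3 = 2 + 1); last by lra.
  by rewrite exprDn; apply: eq_bigr => k _; rewrite expr1n mulr1.
rewrite [leRHS](bigID (fun k : 'I_n.+1 => 3 * k <= n)%N) /= -[leLHS]addr0 lerD //.
  by apply: ler_sum => k kn; rewrite -[leRHS]mulr_natr [leLHS]mulrC ler_wpM2r ?two_thirds.
by apply: sumr_ge0 => k _; rewrite mulrn_wge0 ?exprn_ge0.
Qed.

Lemma F3_le n : (F3 n <= 3 * n.+1 * \sum_(k < n.+1 | 3 * k <= n) 'C(n, k))%N.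
Proof. by apply/bigmax_leqP => F /asboolP; apply: card_sunflower_free_ord_le. Qed.

Lemma F3_le_mu3S_bound n : (F3 n)%:R <= 3 * n.+1%:R * mu3S_bound ^+ n.
Proof.
apply: le_trans (_ : (3 * n.+1 * \sum_(k < n.+1 | 3 * k <= n) 'C(n, k))%N%:R <= _).
  by rewrite ler_nat F3_le.
by rewrite natrM (natrM _ 3) ler_wpM2l ?sum_binomial_third_le.
Qed.

(* For [e > 0] the factor [3 (n + 1)] is eventually below [(1 + e / b) ^ n], so
   [F3 n ^ (1/n) <= b + e] eventually, where [b = mu3S_bound]. *)
Lemma mu3S_le : (mu3S R <= mu3S_bound%:E)%E.
Proof.
have b0 := mu3S_bound_gt0; apply/lee_addgt0Pr => e e0.
apply: limn_esup_le_near; near=> n.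
have n0 : (0 < n)%N by near: n; exists 1%N.
have growth : 3 * n.+1%:R <= (1 + e / mu3S_bound) ^+ n.
  by near: n; apply: linear_le_expr_near; rewrite divr_gt0.
rewrite -EFinD lee_fin; apply: powR_inv_le => //; first by rewrite addr_ge0 ?ltW.
apply: le_trans (F3_le_mu3S_bound n) _.
have -> : mu3S_bound + e = (1 + e / mu3S_bound) * mu3S_bound.
  by rewrite mulrDl mul1r divfK ?lt0r_neq0.
by rewrite [leRHS]exprMn ler_pM2r ?exprn_gt0.
Unshelve. all: by end_near.
Qed.

End Capacity.

Theorem theorem1p3 (R : realType) :
  (forall (n : nat) (F : {set {set 'I_n}}), (1 <= n)%N -> sunflower_free F ->
     (#|F| <= 3 * n.+1 * \sum_(k < n.+1 | 3 * k <= n) 'C(n, k))%N)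
  /\ (mu3S R <= ((3 : R) / ((2 : R) `^ (2 / 3 : R)))%:E)%E.
Proof.
split; last exact: mu3S_le.
(* The bound holds for [n = 0] as well. *)
by move=> n F _; apply: card_sunflower_free_ord_le.
Qed.
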